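(* Let $G$ be an equilibrium graph of a bounded budget network creation game $(b_1,\dots,b_n)$-BG in the SUM version. Let $C$ be a subset of the vertices of $G$ and let $A$ be the vertex set of a connected component of $U(G-C)$, where $G-C$ is the subgraph induced by $V(G)\setminus C$. Assume that for every $v\in A$ we have $\operatorname{dist}(v,C)=1$ and the budget of $v$ is larger than $|C|$. Then every vertex in $A$ has local diameter at most $2$.
   Context: Bounded budget network creation game $(b_1,\dots,b_n)$-BG: $n$ players with integer budgets $0\le b_i\le n-1$. A strategy of player $i$ is a set $S_i\subseteq\{1,\dots,n\}\setminus\{i\}$ with $|S_i|=b_i$; a profile is realized by the directed graph $G$ on $u_1,\dots,u_n$ with an arc $\overrightarrow{u_iu_j}$ iff $j\in S_i$; the budget of vertex $u_i$ is $b_i$. $U(G)$ is the undirected multigraph obtained by ignoring directions. $\operatorname{dist}(u,v)$ is the distance in $U(G)$, defined as $n^2$ between different components; $\operatorname{dist}(u,C)=\min_{c\in C}\operatorname{dist}(u,c)$. The local diameter of $u$ is $\max_v\operatorname{dist}(u,v)$. SUM cost: $c_{SUM}(u)=\sum_v\operatorname{dist}(u,v)$. An equilibrium graph in the SUM version is a realization in which no vertex can decrease its SUM cost by changing its own strategy while the others are fixed. *)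

From mathcomp Require Import all_boot.
Set Implicit Arguments. Unset Strict Implicit. Unset Printing Implicit Defensive.

Section BBG.
Variable n : nat.
Notation V := 'I_n.

Definition strategy (b : V -> nat) (i : V) (T : {set V}) : bool :=
  (i \notin T) && (#|T| == b i).

(* A strategy profile: one strategy per player; it is realized by the digraph
   with an arc u_i -> u_j iff j \in S i. *)
Definition profile (b : V -> nat) (S : V -> {set V}) : Prop :=
  forall i, strategy b i (S i).

Definition adjU (S : V -> {set V}) : rel V :=
  fun u v => (v \in S u) || (u \in S v).

Fixpoint ball (S : V -> {set V}) (k : nat) (u : V) : {set V} :=
  match k with
  | 0 => [set u]
  | k'.+1 => ball S k' u :|: [set y | [exists x in ball S k' u, adjU S x y]]
  end.

(* distance in U(G); n^2 between different components.
   (Any shortest path has fewer than n edges.) *)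
Definition dist (S : V -> {set V}) (u v : V) : nat :=
  \big[minn/n ^ 2]_(k < n | v \in ball S k u) (k : nat).

Definition distSet (S : V -> {set V}) (u : V) (C : {set V}) : nat :=
  \big[minn/n ^ 2]_(c in C) dist S u c.

Definition local_diam (S : V -> {set V}) (u : V) : nat :=
  \max_(v : V) dist S u v.

Definition cost_sum (S : V -> {set V}) (u : V) : nat :=
  \sum_(v : V) dist S u v.

Definition deviate (S : V -> {set V}) (i : V) (T : {set V}) : V -> {set V} :=
  fun j => if j == i then T else S j.

Definition sum_equilibrium (b : V -> nat) (S : V -> {set V}) : Prop :=
  profile b S /\
  forall (i : V) (T : {set V}), strategy b i T ->
    cost_sum S i <= cost_sum (deviate S i T) i.

Definition adjU_minus (S : V -> {set V}) (C : {set V}) : rel V :=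
  fun u v => [&& u \notin C, v \notin C & adjU S u v].

Definition is_component_minus (S : V -> {set V}) (C A : {set V}) : Prop :=
  exists2 x : V, x \notin C & A = [set y | connect (adjU_minus S C) x y].

End BBG.

From mathcomp Require Import all_boot zify.
Set Implicit Arguments. Unset Strict Implicit. Unset Printing Implicit Defensive.

(* If some v in A had a vertex w at distance at least 3, v could give up arcs to
   |E| of its out-neighbours in A \ C and buy arcs to E := {w} together with the
   vertices of C not adjacent to v; the bound |C| < b v makes enough such arcs
   available. Afterwards v is adjacent to all of C, so every vertex of A is within
   distance 2 of v: the abandoned neighbours lose at most 1 each, every vertex of E
   gains at least 1 and w gains at least 2, and vertices outside A lose nothing
   since any path leaving A does so through C. The SUM cost of v strictly drops,
   contradicting equilibrium. *)

Section BigMinNat.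
Variables (I : Type) (r : seq I) (P : pred I) (F : I -> nat) (m : nat).

Lemma bigminn_le_idx : \big[minn/m]_(i <- r | P i) F i <= m.
Proof. by elim/big_rec: _ => // i x _; apply: leq_trans (geq_minr _ _). Qed.

Lemma bigminn_attained : \big[minn/m]_(i <- r | P i) F i != m ->
  exists2 i, P i & \big[minn/m]_(i <- r | P i) F i = F i.
Proof.
elim/big_rec: _ => [/eqP //|i x Pi IH].
by rewrite /minn; case: ltnP => _; [exists i | exact: IH].
Qed.

End BigMinNat.

Lemma bigminn_le (I : eqType) (r : seq I) (P : pred I) (F : I -> nat) m j :
  j \in r -> P j -> \big[minn/m]_(i <- r | P i) F i <= F j.
Proof.
elim: r => // a r IH; rewrite inE big_cons => /predU1P [<- -> | jr Pj].
  exact: geq_minl.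
by case: (P a); rewrite ?geq_min IH ?orbT.
Qed.

Lemma exists_subset_card (T : finType) (X : {set T}) k :
  k <= #|X| -> exists2 D : {set T}, D \subset X & #|D| = k.
Proof.
case/card_geqP => s [uniq_s size_s sX]; exists [set x in s].
  by apply/subsetP => x; rewrite inE => /sX.
by rewrite cardsE -size_s; apply/card_uniqP.
Qed.

Lemma sum_mem_card (T : finType) (X : {set T}) : \sum_(x : T) (x \in X : nat) = #|X|.
Proof. by rewrite -sum1_card [RHS]big_mkcond; apply: eq_bigr => x _; case: (x \in X). Qed.

Section Distances.
Variables (n : nat) (S : 'I_n -> {set 'I_n}).
Implicit Types (u x y : 'I_n).

Lemma adjU_sym x y : adjU S x y = adjU S y x.
Proof. by rewrite /adjU orbC. Qed.

Lemma in_ball0 u y : (y \in ball S 0 u) = (y == u).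
Proof. exact: in_set1. Qed.

Lemma in_ballS k u y :
  (y \in ball S k.+1 u) = (y \in ball S k u) || [exists x in ball S k u, adjU S x y].
Proof. by rewrite /= in_setU in_set. Qed.

Lemma ball_le j k u : j <= k -> ball S j u \subset ball S k u.
Proof.
elim: k => [|k IH]; first by rewrite leqn0 => /eqP ->.
rewrite leq_eqVlt ltnS => /predU1P [-> // | /IH jk].
by apply: subset_trans jk _; rewrite /= subsetUl.
Qed.

Lemma in_ball1 u y : (y \in ball S 1 u) = (y == u) || adjU S u y.
Proof.
rewrite in_ballS in_ball0; congr (_ || _); apply/existsP/idP => [[x]|uy].
  by rewrite in_ball0 => /andP [/eqP ->].
by exists u; rewrite in_ball0 eqxx.
Qed.

Lemma ball2_adj u x y : adjU S u x -> adjU S x y -> y \in ball S 2 u.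
Proof.
by move=> ux xy; rewrite in_ballS; apply/orP; right; apply/existsP; exists x;
  rewrite in_ball1 ux orbT.
Qed.

Lemma dist_ub u y : dist S u y <= n ^ 2.
Proof. exact: bigminn_le_idx. Qed.

Lemma dist_le k u y : k < n -> y \in ball S k u -> dist S u y <= k.
Proof.
move=> kn yk.
exact: (bigminn_le (fun i : 'I_n => i : nat) _ (mem_index_enum (Ordinal kn)) yk).
Qed.

Lemma dist_attained u y :
  dist S u y != n ^ 2 -> exists2 k : 'I_n, y \in ball S k u & dist S u y = k.
Proof. exact: bigminn_attained. Qed.

Lemma dist_leP k u y : k < n -> (dist S u y <= k) = (y \in ball S k u).
Proof.
move=> kn; apply/idP/idP => [dk|]; last exact: dist_le.
have [|j yj dj] := dist_attained (u := u) (y := y).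
  by apply: contraTneq dk => ->; rewrite -ltnNge -mulnn; nia.
by apply: subsetP yj; apply: ball_le; rewrite -dj.
Qed.

Lemma dist_self u : dist S u u = 0.
Proof.
by apply/eqP; rewrite -leqn0 dist_leP ?in_ball0 // (leq_ltn_trans _ (ltn_ord u)).
Qed.

Lemma dist_gt0 u x : x != u -> 0 < dist S u x.
Proof.
by move=> xu; rewrite ltnNge dist_leP ?in_ball0 // (leq_ltn_trans _ (ltn_ord u)).
Qed.

Lemma dist_le1 u y : 1 < n -> adjU S u y -> dist S u y <= 1.
Proof. by move=> n1 uy; rewrite dist_leP // in_ball1 uy orbT. Qed.

Lemma dist_gt1 u x : 1 < n -> x != u -> ~~ adjU S u x -> 1 < dist S u x.
Proof. by move=> n1 xu ux; rewrite ltnNge dist_leP // in_ball1 negb_or xu. Qed.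

Lemma dist_le2 u x y : 2 < n -> adjU S u x -> adjU S x y -> dist S u y <= 2.
Proof. by move=> n2 ux xy; apply: dist_le n2 (ball2_adj ux xy). Qed.

Lemma n_gt1_of_dist u y : 1 < dist S u y -> 1 < n.
Proof. by move=> d1; rewrite -(ltn_sqr 1); apply: leq_trans d1 (dist_ub u y). Qed.

Lemma distSet1_adj u (C : {set 'I_n}) :
  1 < n -> distSet S u C = 1 -> exists2 c, c \in C & adjU S u c.
Proof.
move=> n1 dC; have : distSet S u C != n ^ 2 by rewrite dC -mulnn; apply/eqP; nia.
case/bigminn_attained => c cC dc.
rewrite -/(distSet S u C) dC in dc.
exists c => //; have : dist S u c <= 1 by rewrite -dc.
rewrite dist_leP // in_ball1 => /predU1P [cu|//].
by move: dc; rewrite cu dist_self.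
Qed.

End Distances.

Section Transfer.
Variables (n : nat) (S S' : 'I_n -> {set 'I_n}) (A : {set 'I_n}) (u : 'I_n).
Hypotheses (uA : u \in A)
  (keep_outside : forall x y, x \notin A -> y \notin A -> adjU S x y -> adjU S' x y)
  (exits_near : forall x y, x \in A -> y \notin A -> adjU S x y -> y \in ball S' 1 u).

(* Cut a walk from [u] at its last exit from [A]: the exit point is one [S']-step
   from [u], and the rest of the walk avoids [A], where [S]-edges survive. *)
Lemma ball_transfer k y : y \in ball S k u -> y \notin A -> y \in ball S' k u.
Proof.
elim: k y => [|k IH] y; first by rewrite in_ball0 => /eqP ->; rewrite uA.
move=> + yA; rewrite in_ballS => /orP [yk|/existsP [x /andP [xk xy]]].
  by apply: (subsetP (ball_le S' u (leqnSn k))); rewrite IH.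
case xA: (x \in A).
  exact: (subsetP (ball_le S' u (ltn0Sn k))) _ (exits_near xA yA xy).
rewrite in_ballS; apply/orP; right; apply/existsP; exists x.
by rewrite IH ?xA //= keep_outside ?xA.
Qed.

Lemma dist_transfer y : y \notin A -> dist S' u y <= dist S u y.
Proof.
move=> yA; have [->|] := eqVneq (dist S u y) (n ^ 2); first exact: dist_ub.
case/dist_attained => k yk ->; exact: dist_le (ltn_ord k) (ball_transfer yk yA).
Qed.

End Transfer.

Section Component.
Variables (n : nat) (S : 'I_n -> {set 'I_n}) (C A : {set 'I_n}).
Hypothesis compA : is_component_minus S C A.

Lemma component_minus_notin x : x \in A -> x \notin C.
Proof.
case: compA => x0 x0C ->; rewrite inE => /connectP [p].
case/lastP: p => [_ -> //|p z]; rewrite rcons_path last_rcons => /andP [_].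
by case/and3P => _ + _ ->.
Qed.

Lemma component_minus_closed x y : x \in A -> y \notin C -> adjU S x y -> y \in A.
Proof.
move=> xA yC xy; have xC := component_minus_notin xA.
case: compA xA => x0 _ -> /[!inE] x0x.
by apply: connect_trans x0x (connect1 _); rewrite /adjU_minus xC yC.
Qed.

End Component.

Section Deviate.
Variables (n : nat) (S : 'I_n -> {set 'I_n}) (i : 'I_n) (T : {set 'I_n}).

Lemma adjU_deviate x y : x != i -> y != i -> adjU (deviate S i T) x y = adjU S x y.
Proof. by move=> xi yi; rewrite /adjU /deviate (negbTE xi) (negbTE yi). Qed.

Lemma adjU_deviate_center y : y != i -> adjU (deviate S i T) i y = (y \in T) || (i \in S y).
Proof. by move=> yi; rewrite /adjU /deviate eqxx (negbTE yi). Qed.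

End Deviate.

Section Deviation.
Variables (n : nat) (b : 'I_n -> nat) (S : 'I_n -> {set 'I_n}) (C A : {set 'I_n}).
Variables (v w : 'I_n).
Hypotheses (strategy_v : strategy b v (S v))
  (A_notin_C : forall x, x \in A -> x \notin C)
  (A_closed : forall x y, x \in A -> y \notin C -> adjU S x y -> y \in A)
  (A_adj_C : forall x, x \in A -> exists2 c, c \in C & adjU S x c)
  (vA : v \in A) (budget_v : #|C| < b v) (far_w : 2 < dist S v w).

Let added := w |: [set c in C | ~~ adjU S v c].

Lemma w_neq_v : w != v.
Proof. by apply: contraTneq far_w => ->; rewrite dist_self. Qed.

Lemma n_gt2 : 2 < n.
Proof.
have n1 : 1 < n := n_gt1_of_dist (ltnW far_w).
have [c cC vc] := A_adj_C vA.
rewrite -(card_ord n); apply/card_gt2P; exists v, w, c; split=> //.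
split; first by rewrite eq_sym w_neq_v.
  by apply: contraTneq far_w => ->; rewrite -leqNgt (leq_trans (dist_le1 n1 vc)).
by apply: contraTneq cC => ->; rewrite A_notin_C.
Qed.

Lemma added_notin_Sv x : x \in added -> x \notin S v.
Proof.
have not_adj_w : ~~ adjU S v w.
  by apply: contraTN far_w => /(dist_le1 (ltnW n_gt2)) d1; rewrite -leqNgt (leq_trans d1).
rewrite !inE => /predU1P [-> | /andP [_]]; first move: not_adj_w.
  all: by apply: contra => xS; rewrite /adjU xS.
Qed.

Lemma card_added : #|added| <= #|S v :\: C|.
Proof.
have [_ /eqP card_Sv] := andP strategy_v.
have nonadj_sub : [set c in C | ~~ adjU S v c] \subset C :\: S v.
  by apply/subsetP => c; rewrite !inE /adjU negb_or => /andP [-> /andP [-> _]].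
rewrite cardsU1 cardsD card_Sv setIC.
apply: leq_trans (leq_add (leq_b1 _) (subset_leq_card nonadj_sub)) _.
by rewrite cardsD add1n -subSn ?subset_leq_card ?subsetIl // leq_sub2r.
Qed.

Section Swap.
Variable D : {set 'I_n}.
Hypotheses (D_sub : D \subset S v :\: C) (card_D : #|D| = #|added|).

Let T := (S v :\: D) :|: added.
Let S' := deviate S v T.

Lemma strategy_deviation : strategy b v T.
Proof.
have [vSv /eqP card_Sv] := andP strategy_v.
have DSv : D \subset S v by apply: subset_trans D_sub (subsetDl _ _).
have disj : (S v :\: D) :&: added = set0.
  apply/setP => x; rewrite in_setI in_setD in_set0.
  by case: (boolP (x \in added)) => [/added_notin_Sv/negbTE -> | _]; rewrite ?andbF ?andbT.
apply/andP; split.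
  by rewrite !inE (negbTE vSv) eq_sym (negbTE w_neq_v) (negbTE (A_notin_C vA)) andbF.
have card_D_le := subset_leq_card DSv.
by rewrite cardsU disj cards0 subn0 cardsDS // -card_D subnK // card_Sv.
Qed.

Lemma D_in_A_neq_v x : x \in D -> (x \in A) && (x != v).
Proof.
move/(subsetP D_sub); rewrite inE => /andP [xC xS].
rewrite (A_closed vA xC) /=; last by rewrite /adjU xS.
by apply: contraTneq xS => ->; have [] := andP strategy_v.
Qed.

Lemma adjU_deviate_kept y : adjU S v y -> y \notin D -> adjU S' v y.
Proof.
move=> vy yD; have [yv|yv] := eqVneq y v.
  by move: vy; rewrite yv /adjU orbb; have [/negbTE ->] := andP strategy_v.
rewrite adjU_deviate_center // !inE yD /=.
by move: vy; rewrite /adjU => /orP [-> | ->]; rewrite ?orbT.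
Qed.

Lemma adjU_deviate_C c : c \in C -> adjU S' v c.
Proof.
move=> cC; have [vc|vc] := boolP (adjU S v c).
  apply: adjU_deviate_kept vc _; apply: contraTN cC => /D_in_A_neq_v /andP [cA _].
  exact: A_notin_C.
rewrite adjU_deviate_center; first by rewrite !inE cC vc !orbT.
by apply: contraTneq cC => ->; rewrite A_notin_C.
Qed.

(* Through the neighbour in [C], which is now adjacent to [v]. *)
Lemma dist_deviate_A x : x \in A -> dist S' v x <= 2.
Proof.
move=> xA; have [-> | xv] := eqVneq x v; first by rewrite dist_self.
have [c cC xc] := A_adj_C xA.
have cv : c != v by apply: contraTneq cC => ->; rewrite A_notin_C.
apply: dist_le2 n_gt2 (adjU_deviate_C cC) _.
by rewrite adjU_deviate // adjU_sym.
Qed.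

Lemma dist_deviate_le x : x \notin D -> dist S' v x <= dist S v x.
Proof.
move=> xD; have n1 := ltnW n_gt2.
have [xA | xA] := boolP (x \in A); last first.
  apply: (dist_transfer vA) xA => [y z yA zA | y z yA zA yz].
    have yv : y != v by apply: contraNneq yA => ->.
    have zv : z != v by apply: contraNneq zA => ->.
    by rewrite adjU_deviate.
  rewrite in_ball1 adjU_deviate_C ?orbT //.
  by apply: contraNT zA => zC; apply: A_closed yA zC yz.
have [-> | xv] := eqVneq x v; first by rewrite dist_self.
have [d1 | d2] := leqP (dist S v x) 1; last exact: leq_trans (dist_deviate_A xA) d2.
move: d1; rewrite dist_leP // in_ball1 (negbTE xv) /= => vx.
exact: leq_trans (dist_le1 n1 (adjU_deviate_kept vx xD)) (dist_gt0 S xv).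
Qed.

Lemma dist_deviate_D x : x \in D -> dist S' v x <= (dist S v x).+1.
Proof.
case/D_in_A_neq_v/andP => xA xv; apply: leq_trans (dist_deviate_A xA) _.
by rewrite ltnS dist_gt0.
Qed.

Lemma dist_deviate_added x : x \in added -> dist S' v x + (x == w) < dist S v x.
Proof.
move=> xE; have n1 := ltnW n_gt2.
have xv : x != v.
  move: (xE); rewrite !inE => /predU1P [-> | /andP [xC _]]; first exact: w_neq_v.
  by apply: contraTneq xC => ->; rewrite A_notin_C.
have d1 : dist S' v x <= 1.
  by apply: dist_le1 n1 _; rewrite adjU_deviate_center // in_setU xE orbT.
have [xw | xw] := eqVneq x w.
  by subst x; rewrite /= addn1; apply: leq_trans _ far_w; rewrite !ltnS.
move: xE; rewrite !inE (negbTE xw) /= => /andP [_ nadj].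
by rewrite addn0; apply: leq_ltn_trans d1 (dist_gt1 n1 xv nadj).
Qed.

Lemma dist_deviate_gain x :
  dist S' v x + (x \in added) + (x == w) <= dist S v x + (x \in D).
Proof.
have [xE | xE] := boolP (x \in added).
  have xD : x \notin D.
    by apply: contra (added_notin_Sv xE) => /(subsetP D_sub); rewrite inE => /andP [].
  by rewrite (negbTE xD) addn0 addnAC addn1; apply: dist_deviate_added.
have -> : (x == w) = false by apply: contraNF xE => /eqP ->; rewrite setU11.
rewrite !addn0; have [xD | xD] := boolP (x \in D).
  by rewrite addn1; apply: dist_deviate_D.
by rewrite addn0; apply: dist_deviate_le.
Qed.

Lemma cost_deviate_lt : cost_sum S' v < cost_sum S v.
Proof.
have := @leq_sum _ (index_enum _) xpredT _ _ (fun x _ => dist_deviate_gain x).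
have sum_w : \sum_x (x == w : nat) = 1.
  by rewrite -(cards1 w) -sum_mem_card; apply: eq_bigr => x _; rewrite in_set1.
by rewrite !big_split /= !sum_mem_card sum_w card_D addn1 ltn_add2r.
Qed.

End Swap.

Lemma exists_improving_deviation :
  exists2 T, strategy b v T & cost_sum (deviate S v T) v < cost_sum S v.
Proof.
have [D D_sub card_D] := exists_subset_card card_added.
by exists ((S v :\: D) :|: added); [apply: strategy_deviation | apply: cost_deviate_lt].
Qed.

End Deviation.

Theorem mainTheorem19 (n : nat) (b : 'I_n -> nat) (S : 'I_n -> {set 'I_n})
  (C A : {set 'I_n}) :
  (forall i, b i <= n.-1) ->
  sum_equilibrium b S ->
  is_component_minus S C A ->
  (forall v, v \in A -> distSet S v C = 1) ->
  (forall v, v \in A -> #|C| < b v) ->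
  forall v, v \in A -> local_diam S v <= 2.
Proof.
move=> _ [profile_S equilibrium] compA distC budget v vA.
apply/bigmax_leqP => w _; rewrite leqNgt; apply/negP => far_w.
have A_adj_C x : x \in A -> exists2 c, c \in C & adjU S x c.
  by move=> xA; apply: distSet1_adj (n_gt1_of_dist (ltnW far_w)) (distC x xA).
have [T strategy_T] := exists_improving_deviation (profile_S v)
  (component_minus_notin compA) (component_minus_closed compA) A_adj_C vA
  (budget v vA) far_w.
by apply/negP; rewrite -leqNgt equilibrium.
Qed.
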